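(* For $n\ge0$ let $w_n$ be the number obtained by writing $n$ in base $2$ and reading the resulting string of digits in base $3$ (so if $n=\sum_j \epsilon_j2^j$ with $\epsilon_j\in\{0,1\}$, then $w_n=\sum_j\epsilon_j3^j$). If $\alpha$ is irrational, then $\alpha w_n\bmod 1$ is uniformly distributed on $[0,1)$. *)

From Stdlib Require Import Reals Lra Lia Arith List.
Open Scope R_scope.

(* w n: write n in base 2, read the digit string in base 3.
   n = sum_j eps_j 2^j  ==>  w n = sum_j eps_j 3^j.
   Bits of n beyond position n are all 0, so summing j = 0..n suffices. *)
Definition bin_to_tern (n : nat) : nat :=
  fold_right (fun j acc => ((if Nat.testbit n j then 3 ^ j else 0) + acc)%nat)
             0%nat (seq 0 (S n)).

Definition frac (x : R) : R := x - IZR (Int_part x).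

Definition in_Ico (a b x : R) : bool :=
  if Rle_dec a x then (if Rlt_dec x b then true else false) else false.

Definition count_in (u : nat -> R) (a b : R) (N : nat) : nat :=
  length (filter (fun n => in_Ico a b (u n)) (seq 0 N)).

Definition equidistributed_mod1 (u : nat -> R) : Prop :=
  forall a b : R, 0 <= a -> a <= b -> b <= 1 ->
    Un_cv (fun N => INR (count_in (fun n => frac (u n)) a b N) / INR N) (b - a).

Definition irrational (x : R) : Prop :=
  ~ exists p q : Z, q <> 0%Z /\ x = IZR p / IZR q.

(* The binary digits of n become the ternary digits of w_n, so
   w_(2^J + r) = 3^J + w_r for r < 2^J, and the exponential sums
   S_N(x) = sum_(n<N) e(x w_n) factor over dyadic blocks:
   S_(2^(J+1))(x) = S_(2^J)(x) (1 + e(3^J x)).  As |1 + e(t)| <= 2, and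
   |1 + e(t)| <= sqrt 2 when cos (2 pi t) <= 0, the means S_(2^J)(x) / 2^J tend
   to 0 as soon as cos (2 pi 3^J x) <= 0 for infinitely many J.  This holds for
   irrational x: otherwise the distance from 3^J x to the nearest integer would
   eventually stay below 1/4 while being tripled at each step.  Cutting [0, N)
   into dyadic blocks gives S_N(k alpha) / N -> 0 for every k >= 1, and Weyl's
   criterion concludes.  The criterion is proved with polynomials in
   cos (2 pi k (t - c)): a sharpened power of (1 + cos) / 2 majorizes the
   indicator of [a, b) and is small away from it, and the mean of such a
   polynomial is computed exactly on the grid j / M, which replaces the
   integral. *)

From Stdlib Require Import Reals Lra Lia List ZArith Classical.
From Coquelicot Require Import Coquelicot.
Open Scope R_scope.

(** * Binary digits read in base 3 *)

Definition tern_digit (n j : nat) : nat := if Nat.testbit n j then 3 ^ j else 0.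

Definition tern_sum (n s L : nat) : nat :=
  fold_right (fun j acc => (tern_digit n j + acc)%nat) 0%nat (seq s L).

Lemma tern_sum_S (n s L : nat) :
  tern_sum n s (S L) = (tern_sum n s L + tern_digit n (s + L))%nat.
Proof.
  revert s; induction L as [|L IH]; intros s.
  - unfold tern_sum; cbn; now rewrite !Nat.add_0_r.
  - change (tern_sum n s (S (S L))) with (tern_digit n s + tern_sum n (S s) (S L))%nat.
    change (tern_sum n s (S L)) with (tern_digit n s + tern_sum n (S s) L)%nat.
    rewrite IH, Nat.add_succ_l, Nat.add_succ_r; lia.
Qed.

Lemma tern_digit_high (n j : nat) : (n < 2 ^ j)%nat -> tern_digit n j = 0%nat.
Proof.
  intros Hn; unfold tern_digit.
  now rewrite (Nat.testbit_unique n j false n 0) by (simpl; lia).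
Qed.

Lemma tern_sum_stable (n L d : nat) :
  (n < 2 ^ L)%nat -> tern_sum n 0 (L + d) = tern_sum n 0 L.
Proof.
  intros Hn; induction d as [|d IH]; [now rewrite Nat.add_0_r|].
  rewrite Nat.add_succ_r, tern_sum_S, IH, tern_digit_high; [lia|].
  apply (Nat.lt_le_trans _ _ _ Hn), Nat.pow_le_mono_r; lia.
Qed.

Lemma bin_to_tern_tern_sum (n L : nat) :
  (n < 2 ^ L)%nat -> bin_to_tern n = tern_sum n 0 L.
Proof.
  intros Hn.
  assert (Hn' : (n < 2 ^ S n)%nat) by (pose proof (Nat.pow_gt_lin_r 2 (S n)); lia).
  change (bin_to_tern n) with (tern_sum n 0 (S n)).
  destruct (Nat.le_ge_cases L (S n)) as [HL|HL].
  - replace (S n) with (L + (S n - L))%nat by lia; now apply tern_sum_stable.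
  - replace L with (S n + (L - S n))%nat by lia; now rewrite tern_sum_stable.
Qed.

Lemma tern_sum_double (n : nat) (b : bool) (s L : nat) :
  tern_sum (2 * n + Nat.b2n b) (S s) L = (3 * tern_sum n s L)%nat.
Proof.
  revert s; induction L as [|L IH]; intros s; [reflexivity|].
  unfold tern_sum, tern_digit in *; cbn [seq fold_right]; rewrite IH, Nat.testbit_succ_r.
  destruct (Nat.testbit n s); cbn; lia.
Qed.

Lemma bin_to_tern_double (n : nat) (b : bool) :
  bin_to_tern (2 * n + Nat.b2n b) = (Nat.b2n b + 3 * bin_to_tern n)%nat.
Proof.
  assert (Hn : (n < 2 ^ n)%nat) by (apply Nat.pow_gt_lin_r; lia).
  rewrite (bin_to_tern_tern_sum n n), (bin_to_tern_tern_sum _ (S n)) by (destruct b; simpl; lia).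
  change (tern_sum (2 * n + Nat.b2n b) 0 (S n))
    with (tern_digit (2 * n + Nat.b2n b) 0 + tern_sum (2 * n + Nat.b2n b) 1 n)%nat.
  rewrite tern_sum_double; unfold tern_digit; rewrite Nat.testbit_0_r.
  destruct b; simpl; lia.
Qed.

Lemma bin_to_tern_add_pow2 (J r : nat) :
  (r < 2 ^ J)%nat -> bin_to_tern (2 ^ J + r) = (3 ^ J + bin_to_tern r)%nat.
Proof.
  revert r; induction J as [|J IH]; intros r Hr.
  - replace r with 0%nat by (simpl in Hr; lia); reflexivity.
  - rewrite (Nat.div2_odd r) in Hr |- *.
    replace (2 ^ S J + (2 * Nat.div2 r + Nat.b2n (Nat.odd r)))%nat
      with (2 * (2 ^ J + Nat.div2 r) + Nat.b2n (Nat.odd r))%nat by (simpl; lia).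
    rewrite !bin_to_tern_double, IH by (destruct (Nat.odd r); simpl in *; lia).
    simpl; lia.
Qed.

Fixpoint sumR (f : nat -> R) (n : nat) : R :=
  match n with O => 0 | S n => sumR f n + f n end.

Fixpoint sumC (f : nat -> C) (n : nat) : C :=
  match n with O => 0%C | S n => (sumC f n + f n)%C end.

Lemma sumR_ext (f g : nat -> R) (n : nat) :
  (forall m, (m < n)%nat -> f m = g m) -> sumR f n = sumR g n.
Proof.
  induction n as [|n IH]; intros H; simpl; [reflexivity|].
  rewrite IH by (intros; apply H; lia); now rewrite H by lia.
Qed.

Lemma sumR_le (f g : nat -> R) (n : nat) :
  (forall m, (m < n)%nat -> f m <= g m) -> sumR f n <= sumR g n.
Proof.
  induction n as [|n IH]; intros H; simpl; [lra|].
  apply Rplus_le_compat; [apply IH; intros; apply H|apply H]; lia.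
Qed.

Lemma sumR_plus (f g : nat -> R) (n : nat) :
  sumR (fun m => f m + g m) n = sumR f n + sumR g n.
Proof. induction n as [|n IH]; simpl; [lra|rewrite IH; ring]. Qed.

Lemma sumR_scal (c : R) (f : nat -> R) (n : nat) :
  sumR (fun m => c * f m) n = c * sumR f n.
Proof. induction n as [|n IH]; simpl; [ring|rewrite IH; ring]. Qed.

Lemma sumR_const (c : R) (n : nat) : sumR (fun _ => c) n = c * INR n.
Proof. induction n as [|n IH]; [simpl; ring|rewrite S_INR; simpl; rewrite IH; ring]. Qed.

Lemma sumC_ext (f g : nat -> C) (n : nat) :
  (forall m, (m < n)%nat -> f m = g m) -> sumC f n = sumC g n.
Proof.
  induction n as [|n IH]; intros H; simpl; [reflexivity|].
  rewrite IH by (intros; apply H; lia); now rewrite H by lia.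
Qed.

Lemma sumC_add (f : nat -> C) (a b : nat) :
  sumC f (a + b) = (sumC f a + sumC (fun m => f (a + m)%nat) b)%C.
Proof.
  induction b as [|b IH]; simpl.
  - rewrite Nat.add_0_r; ring.
  - rewrite Nat.add_succ_r; simpl; rewrite IH; ring.
Qed.

Lemma sumC_scal (c : C) (f : nat -> C) (n : nat) :
  sumC (fun m => c * f m)%C n = (c * sumC f n)%C.
Proof. induction n as [|n IH]; simpl; [ring|rewrite IH; ring]. Qed.

Lemma Re_sumC (f : nat -> C) (n : nat) : Re (sumC f n) = sumR (fun m => Re (f m)) n.
Proof. induction n as [|n IH]; simpl; [reflexivity|now rewrite <- IH]. Qed.

Lemma Cmod_sumC_le (f : nat -> C) (n : nat) :
  (forall m, Cmod (f m) <= 1) -> Cmod (sumC f n) <= INR n.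
Proof.
  intros H; induction n as [|n IH]; simpl sumC.
  - rewrite Cmod_0; simpl; lra.
  - rewrite S_INR; eapply Rle_trans; [apply Cmod_triangle|]; specialize (H n); lra.
Qed.

Lemma Rinv_INR_ge_0 (n : nat) : 0 <= / INR n.
Proof.
  destruct n as [|n]; [simpl; rewrite Rinv_0; lra|].
  apply Rlt_le, Rinv_0_lt_compat, lt_0_INR; lia.
Qed.

Lemma Un_cv_0_of_le (u : nat -> R) :
  (forall n, 0 <= u n) ->
  (forall eps, 0 < eps -> exists N0, forall n, (N0 <= n)%nat -> u n <= eps) -> Un_cv u 0.
Proof.
  intros Hpos H eps Heps; destruct (H (eps / 2) ltac:(lra)) as [N0 HN0]; exists N0.
  intros n Hn; unfold R_dist; rewrite Rminus_0_r, Rabs_pos_eq by apply Hpos.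
  specialize (HN0 n Hn); lra.
Qed.

Lemma Un_cv_eventually_const (u : nat -> R) (l : R) (n0 : nat) :
  (forall n, (n0 <= n)%nat -> u n = l) -> Un_cv u l.
Proof.
  intros H eps Heps; exists n0; intros n Hn; rewrite H by lia.
  unfold R_dist; rewrite Rminus_diag, Rabs_R0; exact Heps.
Qed.

Lemma Un_cv_0_of_abs_le (u w : nat -> R) :
  (forall n, Rabs (u n) <= w n) -> Un_cv w 0 -> Un_cv u 0.
Proof.
  intros Hle Hw eps Heps; destruct (Hw eps Heps) as [N HN]; exists N; intros n Hn.
  specialize (HN n Hn); unfold R_dist in *; rewrite Rminus_0_r in *.
  pose proof (Hle n); pose proof (Rle_abs (w n)); lra.
Qed.

Lemma Un_cv_le_eventually (u w : nat -> R) (l1 l2 : R) (n0 : nat) :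
  Un_cv u l1 -> Un_cv w l2 -> (forall n, (n0 <= n)%nat -> u n <= w n) -> l1 <= l2.
Proof.
  intros Hu Hw Hle; apply Rnot_lt_le; intros Hlt.
  destruct (Hu ((l1 - l2) / 2) ltac:(lra)) as [N1 HN1].
  destruct (Hw ((l1 - l2) / 2) ltac:(lra)) as [N2 HN2].
  set (n := Nat.max n0 (Nat.max N1 N2)).
  specialize (HN1 n ltac:(lia)); specialize (HN2 n ltac:(lia)); specialize (Hle n ltac:(lia)).
  unfold R_dist in *; apply Rabs_def2 in HN1; apply Rabs_def2 in HN2; lra.
Qed.

Lemma Un_cv_inv_INR : Un_cv (fun n => / INR n) 0.
Proof. apply cv_infty_cv_0, is_lim_seq_p_infty_Reals, is_lim_seq_INR. Qed.

Lemma Un_cv_const_plus_inv (K C : R) : Un_cv (fun n => K + C * / INR n) K.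
Proof.
  assert (Hconst : forall a : R, Un_cv (fun _ => a) a)
    by (intros a; apply (Un_cv_eventually_const _ _ 0); auto).
  pose proof (CV_plus _ _ _ _ (Hconst K) (CV_mult _ _ _ _ (Hconst C) Un_cv_inv_INR)) as H.
  now rewrite Rmult_0_r, Rplus_0_r in H.
Qed.

Lemma nonincreasing_contracting_often_cv0 (a : nat -> R) (rho : R) :
  (forall J, 0 <= a J) -> (forall J, a (S J) <= a J) -> 0 <= rho < 1 ->
  (forall i0, exists i, (i0 <= i)%nat /\ a (S i) <= rho * a i) -> Un_cv a 0.
Proof.
  intros Hpos Hdec Hrho Hoften.
  assert (Hmono : forall J K, (J <= K)%nat -> a K <= a J).
  { intros J K HJK; induction HJK as [|K _ IH]; [lra|eapply Rle_trans; [apply Hdec|exact IH]]. }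
  assert (Hgeom : forall L, exists J, a J <= rho ^ L * a 0%nat).
  { induction L as [|L [J HJ]]; [exists 0%nat; simpl; lra|].
    destruct (Hoften J) as [i [Hi Hci]]; exists (S i).
    apply (Rle_trans _ (rho * a J)).
    - apply (Rle_trans _ _ _ Hci), Rmult_le_compat_l; [lra|apply Hmono, Hi].
    - simpl; rewrite Rmult_assoc; apply Rmult_le_compat_l; lra. }
  apply Un_cv_0_of_le; [exact Hpos|]; intros eps Heps.
  pose proof (Hpos 0%nat) as Ha0.
  destruct (pow_lt_1_zero rho ltac:(rewrite Rabs_pos_eq; lra) (eps / (a 0%nat + 1)))
    as [L HL]; [apply Rdiv_lt_0_compat; lra|].
  specialize (HL L (le_n L)); rewrite Rabs_pos_eq in HL by (apply pow_le; lra).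
  destruct (Hgeom L) as [J HJ]; exists J; intros n Hn.
  assert (HrL : rho ^ L * (a 0%nat + 1) <= eps).
  { apply Rmult_lt_compat_r with (r := a 0%nat + 1) in HL; [|lra].
    unfold Rdiv in HL; rewrite Rmult_assoc, Rinv_l, Rmult_1_r in HL; lra. }
  pose proof (pow_le rho L ltac:(lra)); pose proof (Hmono J n Hn); nra.
Qed.

(** * Exponential sums over dyadic blocks *)

Definition e2pi (t : R) : C := (cos (2 * PI * t), sin (2 * PI * t)).

Lemma e2pi_add (s t : R) : e2pi (s + t) = (e2pi s * e2pi t)%C.
Proof.
  unfold e2pi, Cmult; simpl; rewrite Rmult_plus_distr_l, cos_plus, sin_plus.
  f_equal; ring.
Qed.

Lemma Cmod_e2pi (t : R) : Cmod (e2pi t) = 1.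
Proof.
  unfold Cmod, e2pi; simpl; transitivity (sqrt 1); [f_equal|apply sqrt_1].
  pose proof (sin2_cos2 (2 * PI * t)) as H; unfold Rsqr in H; nra.
Qed.

Lemma e2pi_nat (n : nat) : e2pi (INR n) = 1%C.
Proof.
  induction n as [|n IH].
  - unfold e2pi; simpl; rewrite Rmult_0_r, cos_0, sin_0; reflexivity.
  - rewrite S_INR, e2pi_add, IH; unfold e2pi; rewrite Rmult_1_r, cos_2PI, sin_2PI.
    apply injective_projections; simpl; ring.
Qed.

Lemma e2pi_add_int (t : R) (z : Z) : e2pi (t + IZR z) = e2pi t.
Proof.
  assert (Hz : e2pi (IZR z) = 1%C).
  { destruct (Z.le_ge_cases 0 z) as [Hz|Hz].
    - destruct (IZN z Hz) as [n ->]; rewrite <- INR_IZR_INZ; apply e2pi_nat.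
    - destruct (IZN (- z) ltac:(lia)) as [n Hn].
      assert (H : (e2pi (IZR z) * e2pi (INR n))%C = 1%C).
      { rewrite <- e2pi_add, INR_IZR_INZ, <- Hn, <- plus_IZR, Z.add_opp_diag_r.
        exact (e2pi_nat 0). }
      now rewrite e2pi_nat, Cmult_1_r in H. }
  now rewrite e2pi_add, Hz, Cmult_1_r.
Qed.

Definition expsum (x : R) (N : nat) : C :=
  sumC (fun n => e2pi (x * INR (bin_to_tern n))) N.

Lemma Cmod_expsum_le (x : R) (N : nat) : Cmod (expsum x N) <= INR N.
Proof. apply Cmod_sumC_le; intros; rewrite Cmod_e2pi; lra. Qed.

Lemma expsum_add_pow2 (x : R) (J r : nat) : (r <= 2 ^ J)%nat ->
  expsum x (2 ^ J + r) = (expsum x (2 ^ J) + e2pi (x * 3 ^ J) * expsum x r)%C.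
Proof.
  intros Hr; unfold expsum; rewrite sumC_add, <- sumC_scal; f_equal.
  apply sumC_ext; intros m Hm.
  rewrite bin_to_tern_add_pow2, plus_INR, pow_INR, Rmult_plus_distr_l, e2pi_add by lia.
  now replace (INR 3) with 3 by (simpl; ring).
Qed.

Lemma expsum_pow2_S (x : R) (J : nat) :
  expsum x (2 ^ S J) = (expsum x (2 ^ J) * (1 + e2pi (x * 3 ^ J)))%C.
Proof.
  replace (2 ^ S J)%nat with (2 ^ J + 2 ^ J)%nat by (simpl; lia).
  rewrite expsum_add_pow2 by lia; ring.
Qed.

Lemma Cmod_expsum_binary (x : R) (J N : nat) : (N < 2 ^ J)%nat ->
  Cmod (expsum x N) <= sumR (fun j => Cmod (expsum x (2 ^ j))) J.
Proof.
  revert N; induction J as [|J IH]; intros N HN; simpl sumR.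
  - replace N with 0%nat by (simpl in HN; lia); unfold expsum; simpl; rewrite Cmod_0; lra.
  - pose proof (Cmod_ge_0 (expsum x (2 ^ J))).
    destruct (Nat.lt_ge_cases N (2 ^ J)) as [HNJ|HNJ]; [specialize (IH N HNJ); lra|].
    rewrite Nat.pow_succ_r' in HN.
    replace N with (2 ^ J + (N - 2 ^ J))%nat by lia.
    rewrite expsum_add_pow2 by lia.
    eapply Rle_trans; [apply Cmod_triangle|]; rewrite Cmod_mult, Cmod_e2pi.
    specialize (IH (N - 2 ^ J)%nat ltac:(lia)); lra.
Qed.

Lemma Cmod_1_plus_e2pi_le (t : R) : Cmod (1 + e2pi t) <= 2.
Proof. eapply Rle_trans; [apply Cmod_triangle|]; rewrite Cmod_1, Cmod_e2pi; lra. Qed.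

Lemma Cmod_1_plus_e2pi_le_sqrt2 (t : R) :
  cos (2 * PI * t) <= 0 -> Cmod (1 + e2pi t) <= sqrt 2.
Proof.
  intros H; unfold Cmod, e2pi; simpl; apply sqrt_le_1_alt.
  pose proof (sin2_cos2 (2 * PI * t)) as H2; unfold Rsqr in H2; nra.
Qed.

Definition cos_pow3_nonpos_often (x : R) : Prop :=
  forall i0, exists i, (i0 <= i)%nat /\ cos (2 * PI * (x * 3 ^ i)) <= 0.

Definition dyadic_mean (x : R) (J : nat) : R := Cmod (expsum x (2 ^ J)) / 2 ^ J.

Lemma dyadic_mean_S (x : R) (J : nat) :
  dyadic_mean x (S J) = dyadic_mean x J * (Cmod (1 + e2pi (x * 3 ^ J)) / 2).
Proof.
  unfold dyadic_mean; rewrite expsum_pow2_S, Cmod_mult; simpl pow.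
  pose proof (pow_lt 2 J ltac:(lra)); field; lra.
Qed.

Lemma dyadic_mean_bounds (x : R) (J : nat) : 0 <= dyadic_mean x J <= 1.
Proof.
  unfold dyadic_mean; pose proof (pow_lt 2 J ltac:(lra)) as HJ.
  pose proof (Cmod_expsum_le x (2 ^ J)) as H; rewrite pow_INR in H.
  replace (INR 2) with 2 in H by (simpl; ring).
  split; [apply Rdiv_le_0_compat; [apply Cmod_ge_0|lra]|].
  now apply (Rdiv_le_1 _ _ HJ).
Qed.

Lemma dyadic_mean_cv0 (x : R) :
  cos_pow3_nonpos_often x ->
  Un_cv (dyadic_mean x) 0.
Proof.
  intros Hoften.
  assert (Hsqrt2 : 0 < sqrt 2 < 2).
  { split; [apply sqrt_lt_R0; lra|].
    rewrite <- (sqrt_pow2 2) at 2 by lra; apply sqrt_lt_1_alt; lra. }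
  apply (nonincreasing_contracting_often_cv0 _ (sqrt 2 / 2)); [apply dyadic_mean_bounds| |lra|].
  - intros J; rewrite dyadic_mean_S.
    pose proof (dyadic_mean_bounds x J); pose proof (Cmod_1_plus_e2pi_le (x * 3 ^ J)).
    pose proof (Cmod_ge_0 (1 + e2pi (x * 3 ^ J))); nra.
  - intros i0; destruct (Hoften i0) as [i [Hi Hcos]]; exists i; split; [exact Hi|].
    rewrite dyadic_mean_S, Rmult_comm; apply Rmult_le_compat_r; [apply dyadic_mean_bounds|].
    pose proof (Cmod_1_plus_e2pi_le_sqrt2 _ Hcos); lra.
Qed.

Lemma dyadic_weighted_sum_le (a : nat -> R) (eps : R) (j0 J : nat) :
  (forall j, 0 <= a j <= 1) -> (forall j, (j0 <= j)%nat -> a j <= eps) ->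
  sumR (fun j => a j * 2 ^ j) J <= 2 ^ j0 + eps * 2 ^ J.
Proof.
  intros Hbd Htail.
  assert (Heps : 0 <= eps) by (specialize (Hbd j0); specialize (Htail j0 (le_n _)); lra).
  assert (Hcrude : forall K, sumR (fun j => a j * 2 ^ j) K <= 2 ^ K).
  { induction K as [|K IH]; simpl; [lra|].
    pose proof (Hbd K); pose proof (pow_lt 2 K ltac:(lra)); nra. }
  pose proof (pow_lt 2 J ltac:(lra)).
  destruct (Nat.le_ge_cases J j0) as [HJ|HJ].
  - pose proof (Rle_pow 2 J j0 ltac:(lra) HJ); specialize (Hcrude J); nra.
  - induction HJ as [|K HK IH].
    + specialize (Hcrude j0); nra.
    + simpl sumR; simpl pow in *.
      pose proof (Htail K HK); pose proof (pow_lt 2 K ltac:(lra)).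
      assert (a K * 2 ^ K <= eps * 2 ^ K) by (apply Rmult_le_compat_r; lra).
      specialize (IH ltac:(lra)); lra.
Qed.

Lemma expsum_avg_cv0 (x : R) :
  cos_pow3_nonpos_often x ->
  Un_cv (fun N => Cmod (expsum x N) / INR N) 0.
Proof.
  intros Hoften; apply Un_cv_0_of_le.
  { intros [|N]; [simpl; unfold Rdiv; rewrite Rinv_0; lra|].
    apply Rdiv_le_0_compat; [apply Cmod_ge_0|apply lt_0_INR; lia]. }
  intros eps Heps.
  destruct (dyadic_mean_cv0 x Hoften (eps / 4) ltac:(lra)) as [j0 Hj0].
  assert (Htail : forall j, (j0 <= j)%nat -> dyadic_mean x j <= eps / 4).
  { intros j Hj; specialize (Hj0 j Hj); unfold R_dist in Hj0.
    rewrite Rminus_0_r in Hj0; apply Rabs_def2 in Hj0; lra. }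
  destruct (INR_unbounded (2 * 2 ^ j0 / eps)) as [n1 Hn1].
  exists (S n1); intros N HN.
  assert (HNpos : 0 < INR N) by (apply lt_0_INR; lia).
  assert (HnN : 2 * 2 ^ j0 / eps < INR N)
    by (apply (Rlt_le_trans _ (INR n1)); [lra|apply le_INR; lia]).
  apply Rlt_div_l in HnN; [|lra].
  destruct (Nat.log2_spec N ltac:(lia)) as [Hlo Hhi].
  set (J := S (Nat.log2 N)) in Hhi.
  assert (H2J : 2 ^ J <= 2 * INR N).
  { apply le_INR in Hlo; rewrite pow_INR in Hlo; replace (INR 2) with 2 in Hlo by (simpl; ring).
    unfold J; simpl pow; lra. }
  assert (Hsum : Cmod (expsum x N) <= 2 ^ j0 + eps / 4 * 2 ^ J).
  { eapply Rle_trans; [apply (Cmod_expsum_binary x J N Hhi)|].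
    rewrite (sumR_ext _ (fun j => dyadic_mean x j * 2 ^ j)).
    - apply dyadic_weighted_sum_le; [apply dyadic_mean_bounds|exact Htail].
    - intros j _; unfold dyadic_mean; pose proof (pow_lt 2 j ltac:(lra)); field; lra. }
  assert (eps / 4 * 2 ^ J <= eps / 2 * INR N) by nra.
  apply Rle_div_l; lra.
Qed.

(** * Orbits of an irrational number under tripling *)

Lemma irrational_nat_mul (alpha : R) (k : nat) :
  irrational alpha -> (1 <= k)%nat -> irrational (INR k * alpha).
Proof.
  intros Hirr Hk [p [q [Hq Heq]]]; apply Hirr.
  assert (Hk0 : INR k <> 0) by (apply not_0_INR; lia).
  exists p, (Z.of_nat k * q)%Z; split; [lia|].
  apply (Rmult_eq_reg_l (INR k)); [|exact Hk0].
  rewrite Heq, mult_IZR, <- INR_IZR_INZ; field; split; [apply not_0_IZR, Hq|exact Hk0].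
Qed.

Lemma cos_pos_near_int (y : R) :
  0 < cos (2 * PI * y) -> exists m : Z, Rabs (y - IZR m) < / 4.
Proof.
  intros Hcos; exists (Zfloor (y + / 2)).
  pose proof (Zfloor_bound (y + / 2)) as Hm.
  set (s := y - IZR (Zfloor (y + / 2))).
  assert (Hs : 0 < cos (2 * PI * s)).
  { change (cos (2 * PI * s)) with (fst (e2pi s)).
    rewrite <- (e2pi_add_int s (Zfloor (y + / 2))); unfold s.
    now replace (y - IZR (Zfloor (y + / 2)) + IZR (Zfloor (y + / 2))) with y by ring. }
  pose proof PI_RGT_0; apply Rabs_def1.
  - apply Rnot_le_lt; intros Hge.
    assert (cos (2 * PI * s) <= 0) by (apply cos_le_0; unfold s in *; nra); lra.
  - apply Rnot_le_lt; intros Hle.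
    assert (cos (2 * PI * s) <= 0); [|lra].
    rewrite <- cos_neg; apply cos_le_0; unfold s in *; nra.
Qed.

(* An integer within 1/4 of [x 3^(i+1)] is 3 times the one within 1/4 of
   [x 3^i] (their distance is below 3/4 + 1/4), so the error is tripled at each
   step; being bounded, it vanishes. *)
Lemma tripling_near_int_orbit (x : R) (i0 : nat) :
  (forall i, (i0 <= i)%nat -> exists m : Z, Rabs (x * 3 ^ i - IZR m) < / 4) ->
  exists m : Z, x * 3 ^ i0 = IZR m.
Proof.
  intros Hnear; destruct (Hnear i0 (le_n _)) as [m0 Hm0]; exists m0.
  set (e := x * 3 ^ i0 - IZR m0).
  assert (Hgrow : forall t, exists m : Z,
             x * 3 ^ (i0 + t) - IZR m = 3 ^ t * e /\ Rabs (3 ^ t * e) < / 4).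
  { induction t as [|t [m [Hm Hb]]].
    - exists m0; rewrite Nat.add_0_r, pow_O, Rmult_1_l; split; [reflexivity|exact Hm0].
    - destruct (Hnear (i0 + S t)%nat ltac:(lia)) as [m' Hm'].
      assert (Hstep : x * 3 ^ (i0 + S t) - IZR (3 * m) = 3 ^ S t * e).
      { rewrite <- tech_pow_Rmult, Rmult_assoc, <- Hm, mult_IZR, Nat.add_succ_r.
        rewrite <- tech_pow_Rmult; ring. }
      assert (Hm'eq : m' = (3 * m)%Z).
      { apply Zminus_eq, one_IZR_lt1; rewrite minus_IZR.
        apply Rabs_def2 in Hm'; apply Rabs_def2 in Hb; rewrite <- tech_pow_Rmult in Hstep.
        split; lra. }
      exists m'; subst m'; split; [exact Hstep|now rewrite <- Hstep]. }
  apply Rminus_diag_uniq; fold e; apply NNPP; intros He.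
  pose proof (Rabs_pos_lt e He) as Hepos.
  destruct (pow_lt_1_zero (/ 3) ltac:(rewrite Rabs_pos_eq; lra) (4 * Rabs e) ltac:(lra))
    as [t Ht].
  specialize (Ht t (le_n t)); rewrite Rabs_pos_eq in Ht by (apply pow_le; lra).
  destruct (Hgrow t) as [m [_ Hb]].
  rewrite Rabs_mult, Rabs_pos_eq in Hb by (apply pow_le; lra).
  assert (Hinv : (/ 3) ^ t * 3 ^ t = 1) by (rewrite <- Rpow_mult_distr, Rinv_l, pow1; lra).
  pose proof (pow_lt 3 t ltac:(lra)); nra.
Qed.

Lemma irrational_cos_pow3_nonpos_often (x : R) :
  irrational x -> cos_pow3_nonpos_often x.
Proof.
  intros Hirr i0; apply NNPP; intros Hnone.
  destruct (tripling_near_int_orbit x i0) as [m Hm].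
  { intros i Hi; apply cos_pos_near_int, Rnot_le_lt; intros Hle; apply Hnone; eauto. }
  apply Hirr; exists m, (3 ^ Z.of_nat i0)%Z; split; [apply Z.pow_nonzero; lia|].
  rewrite <- pow_IZR, <- Hm; field; apply pow_nonzero; lra.
Qed.

(** * Weyl's criterion through cosine polynomials *)

Definition cos_mode (c : R) (k : nat) (t : R) : R := cos (2 * PI * (INR k * (t - c))).

Inductive cos_poly (c : R) : (R -> R) -> Prop :=
| cos_poly_mode (a : R) (k : nat) : cos_poly c (fun t => a * cos_mode c k t)
| cos_poly_add (f g : R -> R) :
    cos_poly c f -> cos_poly c g -> cos_poly c (fun t => f t + g t)
| cos_poly_ext (f g : R -> R) : cos_poly c f -> (forall t, f t = g t) -> cos_poly c g.

Lemma cos_mode_0 (c t : R) : cos_mode c 0 t = 1.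
Proof. unfold cos_mode; simpl; rewrite Rmult_0_l, Rmult_0_r; apply cos_0. Qed.

Lemma cos_mode_mul (c : R) (k l : nat) (t : R) : (l <= k)%nat ->
  cos_mode c k t * cos_mode c l t = / 2 * cos_mode c (k + l) t + / 2 * cos_mode c (k - l) t.
Proof.
  intros Hlk; unfold cos_mode; rewrite plus_INR, minus_INR by exact Hlk.
  set (u := 2 * PI * (t - c)).
  replace (2 * PI * (INR k * (t - c))) with (INR k * u) by (unfold u; ring).
  replace (2 * PI * (INR l * (t - c))) with (INR l * u) by (unfold u; ring).
  replace (2 * PI * ((INR k + INR l) * (t - c))) with (INR k * u + INR l * u) by (unfold u; ring).
  replace (2 * PI * ((INR k - INR l) * (t - c))) with (INR k * u - INR l * u) by (unfold u; ring).
  rewrite cos_plus, cos_minus; field.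
Qed.

Lemma cos_poly_scal (c a : R) (f : R -> R) : cos_poly c f -> cos_poly c (fun t => a * f t).
Proof.
  induction 1 as [b k|f g _ IHf _ IHg|f g _ IH Hfg].
  - apply (cos_poly_ext _ (fun t => (a * b) * cos_mode c k t)); [constructor|intros; ring].
  - apply (cos_poly_ext _ (fun t => a * f t + a * g t)); [now constructor|intros; ring].
  - apply (cos_poly_ext _ _ _ IH); intros; now rewrite Hfg.
Qed.

Lemma cos_poly_const (c a : R) : cos_poly c (fun _ => a).
Proof.
  apply (cos_poly_ext _ (fun t => a * cos_mode c 0 t)); [constructor|].
  intros; rewrite cos_mode_0; ring.
Qed.

Lemma cos_poly_mode_mul_mode (c a b : R) (k l : nat) :
  cos_poly c (fun t => a * cos_mode c k t * (b * cos_mode c l t)).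
Proof.
  assert (Hle : forall a b k l, (l <= k)%nat ->
            cos_poly c (fun t => a * cos_mode c k t * (b * cos_mode c l t))).
  { clear; intros a b k l Hlk.
    apply (cos_poly_ext _ (fun t => (a * b / 2) * cos_mode c (k + l) t
                                    + (a * b / 2) * cos_mode c (k - l) t)).
    - constructor; constructor.
    - intros t; replace (a * cos_mode c k t * (b * cos_mode c l t))
        with (a * b * (cos_mode c k t * cos_mode c l t)) by ring.
      rewrite cos_mode_mul by exact Hlk; field. }
  destruct (Nat.le_ge_cases l k) as [Hlk|Hkl]; [now apply Hle|].
  apply (cos_poly_ext _ _ _ (Hle b a l k Hkl)); intros t; ring.
Qed.

Lemma cos_poly_mul_mode (c : R) (g : R -> R) : cos_poly c g ->
  forall a k, cos_poly c (fun t => a * cos_mode c k t * g t).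
Proof.
  induction 1 as [b l|f g _ IHf _ IHg|f g _ IH Hfg]; intros a k.
  - apply cos_poly_mode_mul_mode.
  - apply (cos_poly_ext _ (fun t => a * cos_mode c k t * f t + a * cos_mode c k t * g t)).
    + constructor; auto.
    + intros; ring.
  - apply (cos_poly_ext _ _ _ (IH a k)); intros; now rewrite Hfg.
Qed.

Lemma cos_poly_mul (c : R) (f g : R -> R) :
  cos_poly c f -> cos_poly c g -> cos_poly c (fun t => f t * g t).
Proof.
  intros Hf Hg; induction Hf as [a k|f1 f2 _ IH1 _ IH2|f1 f2 _ IH Hfg].
  - now apply cos_poly_mul_mode.
  - apply (cos_poly_ext _ (fun t => f1 t * g t + f2 t * g t)); [now constructor|intros; ring].
  - apply (cos_poly_ext _ _ _ IH); intros; now rewrite Hfg.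
Qed.

Lemma cos_poly_pow (c : R) (f : R -> R) (n : nat) :
  cos_poly c f -> cos_poly c (fun t => f t ^ n).
Proof.
  intros Hf; induction n as [|n IH].
  - apply (cos_poly_ext _ _ _ (cos_poly_const c 1)); reflexivity.
  - apply (cos_poly_ext _ _ _ (cos_poly_mul _ _ _ Hf IH)); reflexivity.
Qed.

Definition seq_mean (v : nat -> R) (f : R -> R) (N : nat) : R :=
  sumR (fun n => f (v n)) N / INR N.

Definition grid_mean (f : R -> R) (M : nat) : R :=
  sumR (fun j => f (INR j / INR M)) M / INR M.

Definition weyl_sums_vanish (v : nat -> R) : Prop :=
  forall k, (1 <= k)%nat ->
    Un_cv (fun N => Cmod (sumC (fun n => e2pi (INR k * v n)) N) / INR N) 0.

Lemma sin_telescope_cos_sum (th x : R) (M : nat) :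
  2 * sin (x / 2) * sumR (fun j => cos (th + INR j * x)) M =
  sin (th + INR M * x - x / 2) - sin (th - x / 2).
Proof.
  induction M as [|M IH]; simpl sumR.
  - simpl; replace (th + 0 * x - x / 2) with (th - x / 2) by ring; ring.
  - rewrite Rmult_plus_distr_l, IH, S_INR.
    replace (th + (INR M + 1) * x - x / 2) with ((th + INR M * x) + x / 2) by field.
    replace (th + INR M * x - x / 2) with ((th + INR M * x) - x / 2) by ring.
    rewrite sin_plus, sin_minus; ring.
Qed.

Lemma grid_sum_cos_mode (c : R) (k M : nat) : (1 <= k)%nat -> (k < M)%nat ->
  sumR (fun j => cos_mode c k (INR j / INR M)) M = 0.
Proof.
  intros Hk HkM.
  assert (HM : 0 < INR M) by (apply lt_0_INR; lia).
  assert (Hkpos : 0 < INR k) by (apply lt_0_INR; lia).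
  assert (Hratio : INR k / INR M < 1)
    by (apply Rlt_div_l; [lra|]; rewrite Rmult_1_l; apply lt_INR, HkM).
  pose proof PI_RGT_0.
  set (x := 2 * PI * INR k / INR M); set (th := - (2 * PI * INR k * c)).
  assert (Hs : 0 < sin (x / 2)).
  { replace (x / 2) with (PI * (INR k / INR M)) by (unfold x; field; lra).
    apply sin_gt_0; [apply Rmult_lt_0_compat; [lra|apply Rdiv_lt_0_compat; lra]|nra]. }
  pose proof (sin_telescope_cos_sum th x M) as Htel.
  replace (th + INR M * x - x / 2) with ((th - x / 2) + 2 * INR k * PI) in Htel
    by (unfold x; field; lra).
  rewrite sin_period, Rminus_diag in Htel.
  rewrite (sumR_ext _ (fun j => cos (th + INR j * x))).
  - apply Rmult_integral in Htel; destruct Htel; [lra|assumption].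
  - intros j _; unfold cos_mode, th, x; f_equal; field; lra.
Qed.

Lemma seq_mean_cos_mode_cv0 (v : nat -> R) (c : R) (k : nat) :
  weyl_sums_vanish v -> (1 <= k)%nat -> Un_cv (seq_mean v (cos_mode c k)) 0.
Proof.
  intros HW Hk; refine (Un_cv_0_of_abs_le _ _ _ (HW k Hk)); intros N.
  set (z := sumC (fun n => e2pi (INR k * v n)) N).
  assert (Hre : sumR (fun n => cos_mode c k (v n)) N = Re (e2pi (- (INR k * c)) * z)).
  { unfold z; rewrite <- sumC_scal, Re_sumC; apply sumR_ext; intros n _.
    rewrite <- e2pi_add; unfold cos_mode; simpl; f_equal; ring. }
  unfold seq_mean, Rdiv; rewrite Hre, Rabs_mult, (Rabs_pos_eq (/ INR N)) by apply Rinv_INR_ge_0.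
  apply Rmult_le_compat_r; [apply Rinv_INR_ge_0|].
  eapply Rle_trans; [apply re_le_Cmod|]; rewrite Cmod_mult, Cmod_e2pi; lra.
Qed.

(* The common limit is the constant coefficient: a mode with [k >= 1] averages
   to 0 along [v] by hypothesis, and exactly to 0 on the grid once [M > k]. *)
Lemma cos_poly_same_mean (v : nat -> R) (c : R) (f : R -> R) :
  weyl_sums_vanish v -> cos_poly c f ->
  exists L, Un_cv (seq_mean v f) L /\ Un_cv (grid_mean f) L.
Proof.
  intros HW; induction 1 as [a k|f g _ [Lf [Hfs Hfg]] _ [Lg [Hgs Hgg]]|f g _ [L [Hs Hg]] Hfg].
  - destruct k as [|k].
    + exists a; split; apply (Un_cv_eventually_const _ _ 1); intros n Hn;
        unfold seq_mean, grid_mean;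
        rewrite (sumR_ext _ (fun _ => a)) by (intros; rewrite cos_mode_0; ring);
        rewrite sumR_const; field; apply not_0_INR; lia.
    + exists 0; split.
      * replace 0 with (a * 0) by ring.
        apply (Un_cv_ext (fun N => a * seq_mean v (cos_mode c (S k)) N)).
        { intros N; unfold seq_mean; rewrite sumR_scal; unfold Rdiv; ring. }
        apply CV_mult; [apply (Un_cv_eventually_const _ _ 0); auto|].
        apply seq_mean_cos_mode_cv0; [exact HW|lia].
      * apply (Un_cv_eventually_const _ _ (S (S k))); intros M HM; unfold grid_mean.
        rewrite sumR_scal, grid_sum_cos_mode by lia; unfold Rdiv; ring.
  - exists (Lf + Lg); split.
    + apply (Un_cv_ext (fun N => seq_mean v f N + seq_mean v g N)); [|now apply CV_plus].
      intros N; unfold seq_mean; now rewrite sumR_plus, Rdiv_plus_distr.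
    + apply (Un_cv_ext (fun M => grid_mean f M + grid_mean g M)); [|now apply CV_plus].
      intros M; unfold grid_mean; now rewrite sumR_plus, Rdiv_plus_distr.
  - exists L; split; [apply (Un_cv_ext (seq_mean v f))|apply (Un_cv_ext (grid_mean f))]; auto;
      intros; unfold seq_mean, grid_mean; f_equal; apply sumR_ext; auto.
Qed.

Lemma bernoulli_lower (K : nat) (u : R) : 0 <= u <= 1 -> 1 - INR K * u <= (1 - u) ^ K.
Proof.
  intros Hu; induction K as [|K IH]; [simpl; lra|].
  rewrite S_INR; simpl pow; pose proof (pow_le (1 - u) K ltac:(lra)); pose proof (pos_INR K).
  nra.
Qed.

Lemma bernoulli_upper (K : nat) (u : R) : 0 <= u <= 1 -> (1 - u) ^ K * (1 + INR K * u) <= 1.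
Proof.
  intros Hu; induction K as [|K IH]; [simpl; lra|].
  rewrite S_INR; simpl pow; pose proof (pow_le (1 - u) K ltac:(lra)); pose proof (pos_INR K).
  assert (0 <= (1 - u) ^ K * (u * u * (INR K + 1))) by (apply Rmult_le_pos; nra).
  nra.
Qed.

Lemma pow_between_0_1 (z : R) (m : nat) : 0 <= z <= 1 -> 0 <= z ^ m <= 1.
Proof.
  intros Hz; split; [apply pow_le; lra|].
  rewrite <- (pow1 m); apply pow_incr; lra.
Qed.

Definition sharpen (m K : nat) (z : R) : R := 1 - (1 - z ^ m) ^ K.

Lemma sharpen_bounds (m K : nat) (z : R) : 0 <= z <= 1 -> 0 <= sharpen m K z <= 1.
Proof.
  intros Hz; unfold sharpen; pose proof (pow_between_0_1 z m Hz).
  pose proof (pow_between_0_1 (1 - z ^ m) K ltac:(lra)); lra.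
Qed.

(* For large [m] the monomial [z ^ m] separates [z0] from [z1] by a large factor;
   [K] is then chosen of order [1 / (hi z0 ^ m)]. *)
Lemma sharpen_exists (z0 z1 lo hi : R) :
  0 <= z1 < z0 -> z0 <= 1 -> 0 < lo -> 0 < hi ->
  exists m K : nat,
    (forall z, z0 <= z <= 1 -> 1 - hi <= sharpen m K z) /\
    (forall z, 0 <= z <= z1 -> sharpen m K z <= lo).
Proof.
  intros Hz Hz0 Hlo Hhi.
  pose proof (Rinv_0_lt_compat hi Hhi) as Hihi.
  set (rho := z1 / z0).
  assert (Hrho : 0 <= rho < 1).
  { unfold rho; split; [apply Rdiv_le_0_compat; lra|apply Rlt_div_l; lra]. }
  destruct (pow_lt_1_zero rho ltac:(rewrite Rabs_pos_eq; lra) (lo / (/ hi + 1)))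
    as [m Hm]; [apply Rdiv_lt_0_compat; lra|].
  specialize (Hm m (le_n m)); rewrite Rabs_pos_eq in Hm by (apply pow_le; lra).
  apply Rlt_div_r in Hm; [|lra].
  set (u0 := z0 ^ m) in *.
  assert (Hu0 : 0 < u0 <= 1) by (split; [apply pow_lt|apply pow_between_0_1]; lra).
  destruct (nfloor_ex (/ (hi * u0))) as [n Hn]; [apply Rlt_le, Rinv_0_lt_compat; nra|].
  assert (HK : / hi < INR (S n) * u0 <= / hi + u0).
  { rewrite S_INR; replace (/ hi) with (/ (hi * u0) * u0) by (field; lra); nra. }
  exists m, (S n); split.
  - intros z Hzz; unfold sharpen.
    assert (Hzm : u0 <= z ^ m <= 1) by (split; [apply pow_incr|apply pow_between_0_1]; lra).
    assert ((1 - z ^ m) ^ S n <= (1 - u0) ^ S n) by (apply pow_incr; lra).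
    pose proof (bernoulli_upper (S n) u0 ltac:(lra)).
    pose proof (pow_le (1 - u0) (S n) ltac:(lra)).
    assert (Hinv : hi * / hi = 1) by (field; lra).
    nra.
  - intros z Hzz; unfold sharpen.
    pose proof (bernoulli_lower (S n) (z ^ m) (pow_between_0_1 z m ltac:(lra))).
    assert (Hzm : z ^ m <= rho ^ m * u0).
    { unfold u0; rewrite <- Rpow_mult_distr; apply pow_incr.
      unfold rho; replace (z1 / z0 * z0) with z1 by (field; lra); lra. }
    pose proof (pow_le z m ltac:(lra)); pose proof (pow_le rho m ltac:(lra)).
    assert (INR (S n) * z ^ m <= INR (S n) * (rho ^ m * u0))
      by (apply Rmult_le_compat_l; [apply pos_INR|lra]).
    assert (rho ^ m * (INR (S n) * u0) <= rho ^ m * (/ hi + 1))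
      by (apply Rmult_le_compat_l; lra).
    nra.
Qed.

Lemma cos_poly_sharpen (c : R) (m K : nat) (g : R -> R) :
  cos_poly c g -> cos_poly c (fun t => sharpen m K (g t)).
Proof.
  intros Hg; unfold sharpen.
  apply (cos_poly_ext _ (fun t => 1 + -1 * (1 + -1 * g t ^ m) ^ K)).
  2:{ intros t; replace (1 + -1 * g t ^ m) with (1 - g t ^ m) by ring; ring. }
  apply cos_poly_add; [apply cos_poly_const|].
  apply cos_poly_scal, cos_poly_pow, cos_poly_add; [apply cos_poly_const|].
  apply cos_poly_scal, cos_poly_pow, Hg.
Qed.

Lemma peak_cos_poly (c y0 y1 d : R) : -1 <= y1 < y0 -> y0 <= 1 -> 0 < d < 1 ->
  exists P : R -> R, cos_poly c P /\
    (forall t, 0 <= P t <= / (1 - d)) /\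
    (forall t, y0 <= cos (2 * PI * (t - c)) -> 1 <= P t) /\
    (forall t, cos (2 * PI * (t - c)) <= y1 -> P t <= d).
Proof.
  intros Hy Hy0 Hd.
  destruct (sharpen_exists ((1 + y0) / 2) ((1 + y1) / 2) (d * (1 - d)) d)
    as [m [K [Hhi Hlo]]]; [lra|lra|nra|lra|].
  set (z := fun t => (1 + cos (2 * PI * (t - c))) / 2).
  assert (Hz : forall t, 0 <= z t <= 1).
  { intros t; unfold z; pose proof (COS_bound (2 * PI * (t - c))); lra. }
  assert (Hinv : 1 <= / (1 - d)).
  { rewrite <- Rinv_1; apply Rinv_le_contravar; lra. }
  exists (fun t => / (1 - d) * sharpen m K (z t)); repeat split.
  - apply cos_poly_scal, cos_poly_sharpen.
    apply (cos_poly_ext _ (fun t => / 2 * cos_mode c 0 t + / 2 * cos_mode c 1 t));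
      [constructor; constructor|].
    intros t; rewrite cos_mode_0; unfold z, cos_mode; simpl INR; rewrite Rmult_1_l; field.
  - pose proof (sharpen_bounds m K _ (Hz t)); nra.
  - pose proof (sharpen_bounds m K _ (Hz t)); nra.
  - intros t Ht; specialize (Hhi (z t) ltac:(unfold z in *; split; [lra|apply Hz])).
    apply (Rmult_le_reg_l (1 - d)); [lra|]; rewrite <- Rmult_assoc, Rinv_r; lra.
  - intros t Ht; specialize (Hlo (z t) ltac:(unfold z in *; split; [apply Hz|lra])).
    apply (Rmult_le_reg_l (1 - d)); [lra|]; rewrite <- Rmult_assoc, Rinv_r; lra.
Qed.

Lemma cos_2PI_Rabs (s : R) : cos (2 * PI * Rabs s) = cos (2 * PI * s).
Proof.
  unfold Rabs; destruct (Rcase_abs s); [|reflexivity].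
  rewrite <- cos_neg; f_equal; ring.
Qed.

Lemma cos_2PI_ge_of_Rabs_le (r s : R) :
  Rabs s <= r <= / 2 -> cos (2 * PI * r) <= cos (2 * PI * s).
Proof.
  intros Hs; rewrite <- (cos_2PI_Rabs s); pose proof PI_RGT_0; pose proof (Rabs_pos s).
  apply cos_decr_1; nra.
Qed.

Lemma cos_2PI_le_of_Rabs_between (r s : R) :
  0 <= r -> r <= Rabs s <= 1 - r -> cos (2 * PI * s) <= cos (2 * PI * r).
Proof.
  intros Hr Hs; rewrite <- (cos_2PI_Rabs s); pose proof PI_RGT_0.
  destruct (Rle_dec (Rabs s) (/ 2)) as [Hhalf|Hhalf]; [apply cos_decr_1; nra|].
  change (cos (2 * PI * Rabs s)) with (fst (e2pi (Rabs s))).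
  replace (Rabs s) with (- (1 - Rabs s) + IZR 1) by (simpl; ring).
  rewrite e2pi_add_int; simpl fst.
  replace (2 * PI * - (1 - Rabs s)) with (- (2 * PI * (1 - Rabs s))) by ring.
  rewrite cos_neg; apply cos_decr_1; nra.
Qed.

Definition ind_open (X Y t : R) : R :=
  if Rlt_dec X t then if Rlt_dec t Y then 1 else 0 else 0.

Lemma ind_open_bounds (X Y t : R) : 0 <= ind_open X Y t <= 1.
Proof. unfold ind_open; destruct (Rlt_dec X t); [destruct (Rlt_dec t Y)|]; lra. Qed.

Lemma ind_open_in (X Y t : R) : X < t < Y -> ind_open X Y t = 1.
Proof. intros Ht; unfold ind_open; destruct (Rlt_dec X t); [destruct (Rlt_dec t Y)|]; lra. Qed.

Lemma count_nat_gt (X : R) (n : nat) :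
  sumR (fun j => if Rlt_dec X (INR j) then 1 else 0) n <= Rmax 0 (INR n - X).
Proof.
  induction n as [|n IH]; simpl sumR.
  - unfold Rmax; destruct (Rle_dec 0 (INR 0 - X)); simpl in *; lra.
  - rewrite S_INR; revert IH; unfold Rmax.
    destruct (Rlt_dec X (INR n)); destruct (Rle_dec 0 (INR n - X));
      destruct (Rle_dec 0 (INR n + 1 - X)); intros; lra.
Qed.

(* If [n] itself is counted then [n < Y], so the earlier indices are only
   constrained by [X < j]. *)
Lemma count_nat_open (X Y : R) (n : nat) :
  X < Y -> sumR (fun j => ind_open X Y (INR j)) n <= Y - X + 1.
Proof.
  intros HXY; induction n as [|n IH]; simpl sumR; [lra|].
  unfold ind_open at 2.
  destruct (Rlt_dec X (INR n)) as [HX|HX]; [destruct (Rlt_dec (INR n) Y) as [HY|HY]|]; [|lra|lra].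
  rewrite (sumR_ext _ (fun j => if Rlt_dec X (INR j) then 1 else 0)).
  - pose proof (count_nat_gt X n) as Hgt; revert Hgt; unfold Rmax.
    destruct (Rle_dec 0 (INR n - X)); intros; lra.
  - intros j Hj; apply lt_INR in Hj; unfold ind_open.
    destruct (Rlt_dec X (INR j)); [destruct (Rlt_dec (INR j) Y)|]; lra.
Qed.

Lemma grid_count_open (X Y : R) (M : nat) : X < Y -> (1 <= M)%nat ->
  sumR (fun j => ind_open X Y (INR j / INR M)) M <= (Y - X) * INR M + 1.
Proof.
  intros HXY HM; assert (HMpos : 0 < INR M) by (apply lt_0_INR; lia).
  rewrite (sumR_ext _ (fun j => ind_open (X * INR M) (Y * INR M) (INR j))).
  - eapply Rle_trans; [apply count_nat_open; nra|lra].
  - intros j _; unfold ind_open.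
    pose proof (Rlt_div_r X (INR j) (INR M) HMpos) as HX.
    pose proof (Rlt_div_l (INR j) Y (INR M) HMpos) as HY.
    destruct (Rlt_dec X (INR j / INR M)), (Rlt_dec (X * INR M) (INR j)),
      (Rlt_dec (INR j / INR M) Y), (Rlt_dec (INR j) (Y * INR M)); tauto || reflexivity.
Qed.

Lemma grid_mean_le_of_intervals (P : R -> R) (d B X1 Y1 X2 Y2 X3 Y3 : R) (M : nat) :
  0 <= B -> X1 < Y1 -> X2 < Y2 -> X3 < Y3 -> (1 <= M)%nat ->
  (forall t, 0 <= t < 1 ->
     P t <= d + B * (ind_open X1 Y1 t + ind_open X2 Y2 t + ind_open X3 Y3 t)) ->
  grid_mean P M <= d + B * ((Y1 - X1) + (Y2 - X2) + (Y3 - X3) + 3 / INR M).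
Proof.
  intros HB H1 H2 H3 HM HP; assert (HMpos : 0 < INR M) by (apply lt_0_INR; lia).
  unfold grid_mean; apply Rle_div_l; [lra|].
  eapply Rle_trans.
  { apply sumR_le; intros j Hj; apply HP; split.
    - apply Rdiv_le_0_compat; [apply pos_INR|lra].
    - apply Rlt_div_l; [lra|]; rewrite Rmult_1_l; apply lt_INR, Hj. }
  rewrite sumR_plus, sumR_const, sumR_scal, !sumR_plus.
  pose proof (grid_count_open X1 Y1 M H1 HM); pose proof (grid_count_open X2 Y2 M H2 HM);
  pose proof (grid_count_open X3 Y3 M H3 HM).
  replace ((d + B * (Y1 - X1 + (Y2 - X2) + (Y3 - X3) + 3 / INR M)) * INR M)
    with (d * INR M + B * ((Y1 - X1) * INR M + 1 + ((Y2 - X2) * INR M + 1)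
                          + ((Y3 - X3) * INR M + 1))) by (field; lra).
  apply Rplus_le_compat_l, Rmult_le_compat_l; lra.
Qed.

Lemma peak_le_near_indicators (a b d B : R) (P : R -> R) :
  0 <= a -> a <= b -> b <= 1 -> 0 < d ->
  (forall t, 0 <= P t <= B) ->
  (forall t, cos (2 * PI * (t - (a + b) / 2)) <= cos (2 * PI * ((b - a) / 2 + d)) ->
     P t <= d) ->
  forall t, 0 <= t < 1 ->
  P t <= d + B * (ind_open (a - d) (b + d) t + ind_open (- d) d t
                  + ind_open (1 - d) (1 + d) t).
Proof.
  intros Ha Hab Hb Hd HPB HPfar t Ht.
  pose proof (ind_open_bounds (a - d) (b + d) t); pose proof (ind_open_bounds (- d) d t);
    pose proof (ind_open_bounds (1 - d) (1 + d) t); pose proof (HPB t).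
  assert (Hnear : a - d < t < b + d \/ - d < t < d \/ 1 - d < t < 1 + d ->
    P t <= d + B * (ind_open (a - d) (b + d) t + ind_open (- d) d t
                    + ind_open (1 - d) (1 + d) t)).
  { intros [Hn|[Hn|Hn]]; rewrite (ind_open_in _ _ _ Hn); nra. }
  assert (Hfar : t <= a - d \/ b + d <= t -> d <= t <= 1 - d -> P t <= d).
  { intros Hout Hin; apply HPfar, cos_2PI_le_of_Rabs_between; [lra|].
    unfold Rabs; destruct (Rcase_abs (t - (a + b) / 2)); lra. }
  destruct (Rlt_le_dec t d); [apply Hnear; lra|].
  destruct (Rlt_le_dec (1 - d) t); [apply Hnear; lra|].
  destruct (Rle_lt_dec t (a - d)); [specialize (Hfar ltac:(lra) ltac:(lra)); nra|].
  destruct (Rle_lt_dec (b + d) t); [specialize (Hfar ltac:(lra) ltac:(lra)); nra|].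
  apply Hnear; lra.
Qed.

Definition indicator (a b t : R) : R := if in_Ico a b t then 1 else 0.

Lemma indicator_le_peak (a b t p : R) :
  0 <= p -> (a <= t < b -> 1 <= p) -> indicator a b t <= p.
Proof.
  intros Hp Hin; unfold indicator, in_Ico.
  destruct (Rle_dec a t); [destruct (Rlt_dec t b)|]; auto; lra.
Qed.

Lemma weyl_criterion_upper (v : nat -> R) (a b : R) :
  weyl_sums_vanish v -> 0 <= a -> a <= b -> b <= 1 ->
  forall eps, 0 < eps -> exists N0, forall N, (N0 <= N)%nat ->
    seq_mean v (indicator a b) N <= b - a + eps.
Proof.
  intros HW Ha Hab Hb eps Heps.
  destruct (Rle_lt_dec 1 (b - a + eps)) as [Hbig|Hsmall].
  { exists 1%nat; intros N HN; apply (Rle_trans _ 1); [|lra].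
    apply Rle_div_l; [apply lt_0_INR; lia|]; rewrite <- sumR_const.
    apply sumR_le; intros n _; apply indicator_le_peak; lra. }
  set (d := eps / 16); set (c := (a + b) / 2); set (r := (b - a) / 2).
  pose proof PI_RGT_0.
  assert (Hcos : cos (2 * PI * (r + d)) < cos (2 * PI * r)).
  { apply cos_decreasing_1; unfold r, d in *; nra. }
  destruct (peak_cos_poly c (cos (2 * PI * r)) (cos (2 * PI * (r + d))) d)
    as [P [HP [HPB [HPin HPfar]]]];
    [pose proof (COS_bound (2 * PI * (r + d))); lra|apply COS_bound|unfold d; lra|].
  destruct (cos_poly_same_mean v c P HW HP) as [L [HLseq HLgrid]].
  set (B := / (1 - d)) in HPB.
  assert (HL : L <= d + B * (b - a + 6 * d)).
  { apply (Un_cv_le_eventually _ _ _ _ 1 HLgrid (Un_cv_const_plus_inv _ (3 * B))).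
    intros M HM; eapply Rle_trans.
    - apply (grid_mean_le_of_intervals P d B (a - d) (b + d) (- d) d (1 - d) (1 + d));
        unfold d in *; try lra; [pose proof (HPB 0); lra|exact HM|].
      apply peak_le_near_indicators; auto; unfold d; lra.
    - right; unfold Rdiv; ring. }
  destruct (HLseq d ltac:(unfold d; lra)) as [N0 HN0]; exists N0; intros N HN.
  apply (Rle_trans _ (seq_mean v P N)).
  - unfold seq_mean, Rdiv; apply Rmult_le_compat_r; [apply Rinv_INR_ge_0|].
    apply sumR_le; intros n _; apply indicator_le_peak; [apply HPB|]; intros Hn.
    apply HPin, cos_2PI_ge_of_Rabs_le; unfold r, c, d in *.
    unfold Rabs; destruct (Rcase_abs (v n - (a + b) / 2)); lra.
  - specialize (HN0 N HN); unfold R_dist in HN0; apply Rabs_def2 in HN0.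
    assert (HB : B * (b - a + 6 * d) <= b - a + 14 * d).
    { unfold B; apply (Rmult_le_reg_l (1 - d)); [unfold d; lra|].
      rewrite <- Rmult_assoc, Rinv_r by (unfold d; lra); unfold d in *; nra. }
    unfold d in *; lra.
Qed.

Lemma count_in_sumR (g : nat -> R) (a b : R) (N : nat) :
  INR (count_in g a b N) = sumR (fun n => indicator a b (g n)) N.
Proof.
  induction N as [|N IH]; [reflexivity|]; unfold count_in in *.
  rewrite seq_S, filter_app, length_app, plus_INR, IH; simpl sumR; f_equal.
  unfold indicator; simpl; destruct (in_Ico a b (g N)); simpl; lra.
Qed.

Lemma indicator_partition (a b t : R) : 0 <= a -> a <= b -> b <= 1 -> 0 <= t < 1 ->
  indicator a b t + indicator 0 a t + indicator b 1 t = 1.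
Proof.
  intros Ha Hab Hb Ht; unfold indicator, in_Ico.
  destruct (Rle_dec a t), (Rlt_dec t b), (Rle_dec 0 t), (Rlt_dec t a),
    (Rle_dec b t), (Rlt_dec t 1); lra.
Qed.

(* Upper bounds for [[0, a)] and [[b, 1)] give the lower bound for [[a, b)]. *)
Lemma equidistributed_of_upper (v : nat -> R) :
  (forall n, 0 <= v n < 1) ->
  (forall a b, 0 <= a -> a <= b -> b <= 1 -> forall eps, 0 < eps ->
     exists N0, forall N, (N0 <= N)%nat ->
       seq_mean v (indicator a b) N <= b - a + eps) ->
  forall a b, 0 <= a -> a <= b -> b <= 1 ->
    Un_cv (seq_mean v (indicator a b)) (b - a).
Proof.
  intros Hv Hup a b Ha Hab Hb eps Heps.
  destruct (Hup a b Ha Hab Hb (eps / 2) ltac:(lra)) as [N1 HN1].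
  destruct (Hup 0 a ltac:(lra) Ha ltac:(lra) (eps / 4) ltac:(lra)) as [N2 HN2].
  destruct (Hup b 1 ltac:(lra) Hb ltac:(lra) (eps / 4) ltac:(lra)) as [N3 HN3].
  exists (Nat.max 1 (Nat.max N1 (Nat.max N2 N3))); intros N HN.
  assert (HNpos : 0 < INR N) by (apply lt_0_INR; lia).
  specialize (HN1 N ltac:(lia)); specialize (HN2 N ltac:(lia)); specialize (HN3 N ltac:(lia)).
  assert (Hsum : sumR (fun n => indicator a b (v n)) N + sumR (fun n => indicator 0 a (v n)) N
                 + sumR (fun n => indicator b 1 (v n)) N = INR N).
  { rewrite <- !sumR_plus, <- (Rmult_1_l (INR N)), <- sumR_const.
    apply sumR_ext; intros n _; apply indicator_partition; auto. }
  unfold seq_mean, R_dist in *; apply Rabs_def1;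
    [lra|apply (Rmult_lt_reg_r (INR N)); [exact HNpos|]].
  unfold Rdiv in *; rewrite Rmult_minus_distr_r, Rmult_assoc, Rinv_l by lra.
  apply (Rmult_le_compat_r (INR N)) in HN2, HN3; try lra.
  rewrite Rmult_assoc, Rinv_l in HN2, HN3 by lra; nra.
Qed.

Lemma weyl_sums_frac_bin_to_tern (alpha : R) : irrational alpha ->
  weyl_sums_vanish (fun n => frac (alpha * INR (bin_to_tern n))).
Proof.
  intros Hirr k Hk.
  apply (Un_cv_ext (fun N => Cmod (expsum (INR k * alpha) N) / INR N)).
  - intros N; do 2 f_equal; apply sumC_ext; intros n _; unfold frac.
    set (y := alpha * INR (bin_to_tern n)).
    replace (INR k * (y - IZR (Int_part y)))
      with (INR k * alpha * INR (bin_to_tern n) + IZR (- (Z.of_nat k * Int_part y)))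
      by (rewrite opp_IZR, mult_IZR, <- INR_IZR_INZ; unfold y; ring).
    now rewrite e2pi_add_int.
  - apply expsum_avg_cv0, irrational_cos_pow3_nonpos_often, irrational_nat_mul; assumption.
Qed.

Theorem mainTheorem9 (alpha : R) :
  irrational alpha ->
  equidistributed_mod1 (fun n => alpha * INR (bin_to_tern n)).
Proof.
  intros Hirr a b Ha Hab Hb.
  set (v := fun n => frac (alpha * INR (bin_to_tern n))).
  apply (Un_cv_ext (seq_mean v (indicator a b))).
  { intros N; now rewrite count_in_sumR. }
  apply equidistributed_of_upper; auto.
  - intros n; unfold v, frac; pose proof (base_Int_part (alpha * INR (bin_to_tern n))); lra.
  - intros a' b' Ha' Hab' Hb'; apply weyl_criterion_upper; auto.
    apply weyl_sums_frac_bin_to_tern, Hirr.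
Qed.
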